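(* For any nonempty starting set $S_0\subseteq V$, any integer $T\geq 0$, and any stopping time $\tau$ (with respect to the natural filtration) for the volume-biased evolving set process $(S_t)$ started from $S_0$ with $\tau\leq T$ almost surely, \[ \widehat{\mathbf E}_{S_0}\Big[\frac{\mathrm{cost}(S_0,\dots,S_\tau)}{\mu(S_\tau)}\Big] \leq 1+4\sqrt{T\log\mu(V)}, \] where $\mathrm{cost}(S_0,\dots,S_t)=\mu(S_0)+\sum_{j=1}^{t}\big(\mu(S_j\,\Delta\, S_{j-1})+\partial(S_{j-1})\big)$ and $\Delta$ denotes symmetric difference.
   Context: Let $G=(V,E)$ be a finite simple undirected graph in which every vertex has positive degree $d(x)$. For $S\subseteq V$, $\mu(S)=\sum_{x\in S}d(x)$, $\partial(S)$ is the number of edges with exactly one endpoint in $S$, and $\phi(S)=\partial(S)/\mu(S)$. $\log$ is the natural logarithm. The lazy random walk has transition kernel $p(x,y)=1/(2d(x))$ if $\{x,y\}\in E$, $p(x,x)=1/2$, and $0$ otherwise; $p(x,S)=\sum_{y\in S}p(x,y)$. The evolving set process (ESP): from state $S$, pick $U$ uniform on $[0,1]$ and move to $\{y: p(y,S)\geq U\}$; $K(S,S')$ denotes its transition kernel. The volume-biased ESP is the Markov chain on nonempty subsets with kernel $\widehat K(S,S')=\frac{\mu(S')}{\mu(S)}K(S,S')$; $\widehat{\mathbf E}_{S_0}$ denotes expectation for it started at $S_0$. *)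

From mathcomp Require Import all_boot.
From Stdlib Require Import Reals.

Set Implicit Arguments.
Unset Strict Implicit.
Unset Printing Implicit Defensive.

Definition rsum (A : Type) (s : seq A) (f : A -> R) : R :=
  foldr (fun a acc => Rplus (f a) acc) 0%R s.

Section ESP.
Variable V : finType.
(* simple undirected graph: e symmetric and irreflexive (hypotheses of the theorem) *)
Variable e : rel V.

Definition deg (x : V) : nat := #|[set y | e x y]|.

Definition vol (S : {set V}) : R := INR (\sum_(x in S) deg x).

(* boundary: number of edges with exactly one endpoint in S; each such edge
   {x,y} is counted once as the ordered pair (x,y) with x in S, y not in S *)
Definition bdry (S : {set V}) : R :=
  INR #|[set pr : V * V | [&& pr.1 \in S, pr.2 \notin S & e pr.1 pr.2]]|.

Definition symdiff (A B : {set V}) : {set V} := (A :\: B) :|: (B :\: A).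

Definition lazyP (x y : V) : R :=
  if x == y then (/ 2)%R
  else if e x y then (/ (2 * INR (deg x)))%R else 0%R.

Definition lazyPS (x : V) (S : {set V}) : R := rsum (enum S) (fun y => lazyP x y).

(* Evolving set kernel K(S,S') = Leb{ U in [0,1] : {y : p(y,S) >= U} = S' }.
   {y : p(y,S) >= U} = S'  iff  U <= min_{y in S'} p(y,S)  and
   U > max_{y notin S'} p(y,S); so K(S,S') is the length of that interval
   intersected with [0,1] (empty min = 1, empty max = 0; p(y,S) in [0,1]). *)
Definition esp_hi (S S' : {set V}) : R :=
  foldr Rmin 1%R [seq lazyPS y S | y <- enum S'].
Definition esp_lo (S S' : {set V}) : R :=
  foldr Rmax 0%R [seq lazyPS y S | y <- enum (~: S')].
Definition espK (S S' : {set V}) : R := Rmax 0 (esp_hi S S' - esp_lo S S').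

Definition espKhat (S S' : {set V}) : R := (vol S' / vol S * espK S S')%R.

(* A trajectory of length T from S0 is encoded by w = (S_1,...,S_T). *)
Definition state (S0 : {set V}) (w : seq {set V}) (j : nat) : {set V} :=
  nth S0 (S0 :: w) j.

Definition path_weight (T : nat) (S0 : {set V}) (w : seq {set V}) : R :=
  foldr Rmult 1%R [seq espKhat (state S0 w j) (state S0 w j.+1) | j <- iota 0 T].

Definition expect (T : nat) (S0 : {set V}) (f : T.-tuple {set V} -> R) : R :=
  rsum (enum {: T.-tuple {set V}}) (fun w => (path_weight T S0 w * f w)%R).

Definition cost (S0 : {set V}) (w : seq {set V}) (t : nat) : R :=
  (vol S0 + rsum (iota 1 t)
     (fun j => vol (symdiff (state S0 w j) (state S0 w j.-1))
               + bdry (state S0 w j.-1)))%R.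

End ESP.

Definition is_stopping_time (V : finType) (T : nat) (S0 : {set V})
    (tau : T.-tuple {set V} -> nat) : Prop :=
  forall (w w' : T.-tuple {set V}) (t : nat),
    (forall j, (j <= t)%N -> state S0 w j = state S0 w' j) ->
    (tau w = t <-> tau w' = t).

(* Proof strategy (a potential-function argument).  Write [X = mu(S')/mu(S)]
   for one step [S -> S'] of the evolving set process.  Laziness of the walk
   gives three one-step identities: [E X = 1] (the volume is a martingale),
   [E mu(S' Delta S) = bdry(S)], and, since [S'] and [S] are nested,
   [E |X - 1| = phi(S)].  Combined with the scalar inequality
   [2 |x - 1| <= l (x ln x - x + 1) + 2 (1 + x) / l], this shows that the
   potential [a / mu(S) + l (ln mu(V) - ln mu(S)) + 4 t / l] (accumulated
   cost [a], [t] steps left) does not increase in expectation under the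
   volume-biased kernel once the cost of the step is added to [a].  An
   induction on the horizon, restarting the trajectory after its first step
   (the Markov property together with the stopping-time property), bounds
   the expected normalized stopped cost by the initial potential; choosing
   [l = 2 sqrt (T ln mu(V)) / ln mu(V)] gives [1 + 4 sqrt (T ln mu(V))]. *)

From HB Require Import structures.
From mathcomp Require Import all_boot.
From Stdlib Require Import Reals Lra Psatz.

Set Implicit Arguments.
Unset Strict Implicit.
Unset Printing Implicit Defensive.

Local Open Scope R_scope.

Lemma ln_le_mono x y : 0 < x -> x <= y -> ln x <= ln y.
Proof.
move=> hx hxy; case: (Rle_lt_or_eq_dec _ _ hxy) => [h|->]; last lra.
exact/Rlt_le/ln_increasing.
Qed.

(* Tangent-line bound for [ln] at 1, read at [/ s]: [1 - 1/s <= ln s]. *)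
Lemma ln_ge_1_sub_inv s : 0 < s -> 1 - / s <= ln s.
Proof.
move=> hs; have := exp_ineq1_le (ln (/ s)).
rewrite exp_ln ?ln_Rinv //; [lra|exact: Rinv_0_lt_compat].
Qed.

Lemma entropy_ge_sqrt_gap x : 0 <= x ->
  (sqrt x - 1) * (sqrt x - 1) <= x * ln x - x + 1.
Proof.
move=> hx; case: (Req_dec x 0) => [->|x0].
  rewrite sqrt_0; lra.
have sp : 0 < sqrt x by apply: sqrt_lt_R0; lra.
have ss : sqrt x * sqrt x = x by apply: sqrt_sqrt.
have ln_x : ln x = 2 * ln (sqrt x) by rewrite -{1}ss ln_mult //; ring.
rewrite ln_x; move: (sqrt x) sp ss => s sp ss {ln_x}; subst x.
have hln := ln_ge_1_sub_inv sp.
have e1 : 1 - / s = (s - 1) / s by field; lra.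
rewrite e1 in hln.
have : s * s * ((s - 1) / s) <= s * s * ln s by apply: Rmult_le_compat_l; nra.
have -> : s * s * ((s - 1) / s) = s * (s - 1) by field; lra.
nra.
Qed.

(* Proof: [|x - 1| = |sqrt x - 1| (sqrt x + 1)] and AM-GM. *)
Lemma abs_dev_le_entropy x l : 0 <= x -> 0 < l ->
  2 * Rabs (x - 1) <= l * (x * ln x - x + 1) + 2 * (1 + x) / l.
Proof.
move=> hx hl.
have hent := entropy_ge_sqrt_gap hx.
have ss : sqrt x * sqrt x = x by apply: sqrt_sqrt.
move: (sqrt x) (sqrt_pos x) ss hent => s s0 ss hent; subst x.
have -> : Rabs (s * s - 1) = Rabs (s - 1) * (s + 1).
  by rewrite -(Rabs_pos_eq (s + 1)) -?Rabs_mult; [congr Rabs; ring|lra].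
have uu : Rabs (s - 1) * Rabs (s - 1) = (s - 1) * (s - 1).
  by rewrite -Rabs_mult Rabs_pos_eq //; apply: Rle_0_sqr.
have amgm := Rle_0_sqr (l * Rabs (s - 1) - (s + 1)); rewrite /Rsqr in amgm.
have gap := Rle_0_sqr (s - 1); rewrite /Rsqr in gap.
apply: (Rmult_le_reg_l l) => //.
have -> : l * (l * (s * s * ln (s * s) - s * s + 1) + 2 * (1 + s * s) / l) =
          l * l * (s * s * ln (s * s) - s * s + 1) + 2 * (1 + s * s) by field; lra.
nra.
Qed.

HB.instance Definition _ := Monoid.isComLaw.Build R 0 Rplus
  (fun a b c => esym (Rplus_assoc a b c)) Rplus_comm Rplus_0_l.

Lemma rsumE (A : Type) (s : seq A) (f : A -> R) :
  rsum s f = \big[Rplus/0]_(x <- s) f x.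
Proof. by elim: s => [|a s IH] /=; rewrite ?big_nil // big_cons IH. Qed.

Section RealSums.
Variables (I : Type) (r : seq I) (P : pred I).

Lemma Rsum_mull (F : I -> R) c :
  c * \big[Rplus/0]_(i <- r | P i) F i = \big[Rplus/0]_(i <- r | P i) (c * F i).
Proof. by apply: (big_endo (Rmult c)) => [x y|]; [exact: Rmult_plus_distr_l|exact: Rmult_0_r]. Qed.

Lemma Rsum_mulr (F : I -> R) c :
  \big[Rplus/0]_(i <- r | P i) F i * c = \big[Rplus/0]_(i <- r | P i) (F i * c).
Proof. by rewrite Rmult_comm Rsum_mull; apply: eq_bigr => i _; exact: Rmult_comm. Qed.

Lemma Rsum_le (F G : I -> R) : (forall i, P i -> F i <= G i) ->
  \big[Rplus/0]_(i <- r | P i) F i <= \big[Rplus/0]_(i <- r | P i) G i.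
Proof. by move=> H; apply: (big_ind2 (fun x y => x <= y)) => // *; lra. Qed.

Lemma Rsum_ge0 (F : I -> R) : (forall i, P i -> 0 <= F i) ->
  0 <= \big[Rplus/0]_(i <- r | P i) F i.
Proof. by move=> H; apply: (big_ind (fun x => 0 <= x)) => // *; lra. Qed.

Lemma INR_sum (F : I -> nat) :
  INR (\sum_(i <- r | P i) F i)%nat = \big[Rplus/0]_(i <- r | P i) INR (F i).
Proof. by apply: (big_morph INR) => [x y|]; [exact: plus_INR|]. Qed.

End RealSums.

Lemma Rsum_lin3 (I : finType) (F G H : I -> R) a b c :
  \big[Rplus/0]_(i : I) (a * F i + b * G i + c * H i) =
  a * \big[Rplus/0]_(i : I) F i + b * \big[Rplus/0]_(i : I) G i
  + c * \big[Rplus/0]_(i : I) H i.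
Proof. by rewrite !big_split /= !Rsum_mull. Qed.

Lemma Rsum_lin4 (I : finType) (F G H J : I -> R) a b c d :
  \big[Rplus/0]_(i : I) (a * F i + b * G i + c * H i + d * J i) =
  a * \big[Rplus/0]_(i : I) F i + b * \big[Rplus/0]_(i : I) G i
  + c * \big[Rplus/0]_(i : I) H i + d * \big[Rplus/0]_(i : I) J i.
Proof. by rewrite !big_split /= !Rsum_mull. Qed.

Lemma Rsum_if_const (I : finType) (P : pred I) c :
  \big[Rplus/0]_(i : I) (if P i then c else 0) = INR #|[set i | P i]| * c.
Proof.
rewrite -big_mkcond (eq_bigl (fun i => i \in [set i | P i])); last by move=> i; rewrite inE.
rewrite big_const; elim: #|_| => [|n IH]; first by rewrite /=; ring.
by rewrite iterS IH S_INR /=; ring.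
Qed.

Lemma Rsum_pick (I : finType) (x : I) c :
  \big[Rplus/0]_(y : I) (if x == y then c else 0) = c.
Proof.
rewrite -big_mkcond (eq_bigl (fun y => y == x)); first exact: big_pred1_eq.
by move=> y; exact: eq_sym.
Qed.

Section FoldBounds.
Variables (Ty : eqType) (p : Ty -> R).

Lemma fold_min_le s y : y \in s -> foldr Rmin 1 [seq p x | x <- s] <= p y.
Proof.
elim: s => [|a s IH] //=; rewrite inE => /orP [/eqP->|/IH H]; first exact: Rmin_l.
exact: Rle_trans (Rmin_r _ _) H.
Qed.

Lemma fold_min_glb s c : c <= 1 -> (forall y, y \in s -> c <= p y) ->
  c <= foldr Rmin 1 [seq p x | x <- s].
Proof.
move=> c1; elim: s => [|a s IH] //= H.
apply: Rmin_glb; first by apply: H; rewrite inE eqxx.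
by apply: IH => y ys; apply: H; rewrite inE ys orbT.
Qed.

Lemma fold_max_ge s y : y \in s -> p y <= foldr Rmax 0 [seq p x | x <- s].
Proof.
elim: s => [|a s IH] //=; rewrite inE => /orP [/eqP->|/IH H]; first exact: Rmax_l.
exact: Rle_trans H (Rmax_r _ _).
Qed.

Lemma fold_max_lub s c : 0 <= c -> (forall y, y \in s -> p y <= c) ->
  foldr Rmax 0 [seq p x | x <- s] <= c.
Proof.
move=> c0; elim: s => [|a s IH] //= H.
apply: Rmax_lub; first by apply: H; rewrite inE eqxx.
by apply: IH => y ys; apply: H; rewrite inE ys orbT.
Qed.

Lemma fold_max_ge0 s : 0 <= foldr Rmax 0 [seq p x | x <- s].
Proof. by elim: s => [|a s IH] /=; [lra|exact: Rle_trans IH (Rmax_r _ _)]. Qed.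

Lemma exists_argmin (s : seq Ty) : s != [::] ->
  exists2 y, y \in s & forall z, z \in s -> p y <= p z.
Proof.
elim: s => [|a s IH] // _; case: (eqVneq s [::]) => [->|/IH [y ys Hy]].
  by exists a; rewrite ?inE // => z; rewrite inE => /eqP->; lra.
case: (Rle_lt_dec (p a) (p y)) => Hay.
  by exists a; rewrite ?inE ?eqxx // => z; rewrite inE => /orP [/eqP->|/Hy]; lra.
by exists y; rewrite ?inE ?ys ?orbT // => z; rewrite inE => /orP [/eqP->|/Hy]; lra.
Qed.

End FoldBounds.

Lemma proper_witness (T : finType) (B A : {set T}) : A \subset B -> A != B ->
  exists z, z \in B :\: A.
Proof.
move=> AB AneB; have /properP [_ [z zB zA]] : A \proper B by rewrite properEneq AneB.
by exists z; rewrite inE zA.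
Qed.

(* Given a profile [p : Ty -> [0,1]] and a finite set [U],
   draw [u] uniformly in [0,1] and form [{y in U | u <= p y}].  This set is
   [A] exactly when [lo < u <= hi], where [hi] is the minimum of [p] on [A]
   and [lo] the maximum of [p] on [U :\: A]; [thr_mass U A] is the length of
   that interval.  The evolving set kernel is the case [U = setT].  We show
   that these masses form a probability distribution whose one-point
   marginals are [P(y in A) = p y]; both follow by peeling off a point of [U]
   where [p] is minimal. *)
Section ThresholdSets.
Variables (Ty : finType) (p : Ty -> R).
Hypotheses (p_ge0 : forall y, 0 <= p y) (p_le1 : forall y, p y <= 1).

Definition thr_hi (A : {set Ty}) : R := foldr Rmin 1 [seq p y | y <- enum A].
Definition thr_lo (U A : {set Ty}) : R := foldr Rmax 0 [seq p y | y <- enum (U :\: A)].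
Definition thr_mass (U A : {set Ty}) : R := Rmax 0 (thr_hi A - thr_lo U A).

Lemma thr_hi_le (A : {set Ty}) y : y \in A -> thr_hi A <= p y.
Proof. by move=> yA; apply: fold_min_le; rewrite mem_enum. Qed.

Lemma thr_hi_glb (A : {set Ty}) c :
  c <= 1 -> (forall y, y \in A -> c <= p y) -> c <= thr_hi A.
Proof. by move=> c1 H; apply: fold_min_glb => // y; rewrite mem_enum; apply: H. Qed.

Lemma thr_lo_ge (U A : {set Ty}) y : y \in U :\: A -> p y <= thr_lo U A.
Proof. by move=> yA; apply: fold_max_ge; rewrite mem_enum. Qed.

Lemma thr_lo_lub (U A : {set Ty}) c :
  0 <= c -> (forall y, y \in U :\: A -> p y <= c) -> thr_lo U A <= c.
Proof. by move=> c0 H; apply: fold_max_lub => // y; rewrite mem_enum; apply: H. Qed.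

Lemma thr_lo_self (U : {set Ty}) : thr_lo U U = 0.
Proof.
apply: Rle_antisym; last exact: fold_max_ge0.
by apply: thr_lo_lub => [|y]; [lra|rewrite setDv inE].
Qed.

Lemma thr_mass_gap (U A : {set Ty}) y z :
  y \in A -> z \in U :\: A -> p y <= p z -> thr_mass U A = 0.
Proof.
move=> yA zUA le_yz; rewrite /thr_mass Rmax_left //.
have := thr_hi_le yA; have := thr_lo_ge zUA; lra.
Qed.

Section Peel.
Variables (U : {set Ty}) (y0 : Ty).
Hypotheses (y0U : y0 \in U) (y0_min : forall z, z \in U -> p y0 <= p z).
Let U' := U :\ y0.

(* The whole of [U] is selected exactly when [u <= p y0]. *)
Lemma thr_mass_full : thr_mass U U = p y0.
Proof.
have hi_U : thr_hi U = p y0.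
  by apply: Rle_antisym; [exact: thr_hi_le|exact: thr_hi_glb].
by rewrite /thr_mass thr_lo_self hi_U Rminus_0_r Rmax_right.
Qed.

Lemma thr_mass_through_min (A : {set Ty}) :
  A \subset U -> y0 \in A -> A != U -> thr_mass U A = 0.
Proof.
move=> AU y0A AneU; have [z zUA] := proper_witness AU AneU.
by apply: (thr_mass_gap y0A zUA); apply: y0_min; move: zUA; rewrite inE => /andP [].
Qed.

(* Selecting [U :\ y0] inside [U] needs in addition [p y0 < u]. *)
Lemma thr_mass_peeled_self : thr_mass U U' = thr_mass U' U' - p y0.
Proof.
have lo_U : thr_lo U U' = p y0.
  apply: Rle_antisym; last by apply: thr_lo_ge; rewrite !inE eqxx y0U.
  apply: thr_lo_lub => [|y]; first exact: p_ge0.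
  rewrite !inE => /andP [y_y0 yU]; rewrite yU andbT negbK in y_y0.
  by rewrite (eqP y_y0); lra.
have hi_U' : p y0 <= thr_hi U'.
  by apply: thr_hi_glb => // y; rewrite inE => /andP [_ /y0_min].
rewrite /thr_mass lo_U thr_lo_self Rminus_0_r !Rmax_right //; try lra.
exact: Rle_trans hi_U'.
Qed.

(* Smaller sets are selected inside [U] as inside [U :\ y0], since a point
   of [U :\ y0] outside [A] already forces [u > p y0]. *)
Lemma thr_mass_peeled (A : {set Ty}) :
  A \subset U' -> A != U' -> thr_mass U A = thr_mass U' A.
Proof.
move=> AU' AneU'; have [z zUA] := proper_witness AU' AneU'.
rewrite /thr_mass; congr (Rmax 0 (_ - _)); apply: Rle_antisym.
  apply: thr_lo_lub => [|y]; first exact: fold_max_ge0.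
  rewrite !inE => /andP [yA yU]; case: (eqVneq y y0) => [->|ny0].
    apply: Rle_trans (y0_min _) (thr_lo_ge zUA).
    by move: zUA; rewrite !inE => /and3P [].
  by apply: thr_lo_ge; rewrite !inE ny0 yA yU.
apply: thr_lo_lub => [|y]; first exact: fold_max_ge0.
by rewrite !inE => /and3P [yA yn yU]; apply: thr_lo_ge; rewrite !inE yA yU.
Qed.

(* Removing a minimal point [y0]: the threshold distribution on [U] equals
   the one on [U :\ y0], except that mass [p y0] moves from [U :\ y0] to [U]. *)
Lemma thr_mass_peel (f : {set Ty} -> R) :
  \big[Rplus/0]_(A : {set Ty} | A \subset U) (thr_mass U A * f A) =
  \big[Rplus/0]_(A : {set Ty} | A \subset U') (thr_mass U' A * f A)
  + p y0 * (f U - f U').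
Proof.
rewrite (bigID (fun A : {set Ty} => y0 \in A)) /=.
rewrite (bigD1 U) /=; last by rewrite subxx y0U.
rewrite big1 => [|A /andP [/andP [AU y0A] AneU]]; last first.
  by rewrite thr_mass_through_min // Rmult_0_l.
rewrite (eq_bigl (fun A : {set Ty} => A \subset U')) => [|A]; last by rewrite subsetD1.
rewrite (bigD1 U') // [in RHS](bigD1 U') //=.
rewrite (eq_bigr (fun A => thr_mass U' A * f A)) => [|A /andP [AU' AneU']]; last first.
  by rewrite thr_mass_peeled.
rewrite thr_mass_full thr_mass_peeled_self; ring.
Qed.

End Peel.

Lemma thr_set_ind (P : {set Ty} -> Prop) :
  P set0 ->
  (forall (U : {set Ty}) y0, y0 \in U -> (forall z, z \in U -> p y0 <= p z) ->
     P (U :\ y0) -> P U) ->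
  forall U, P U.
Proof.
move=> P0 Pstep U; move: {2}#|U| (erefl #|U|) => n; elim: n U => [|n IH] U cU.
  by move/eqP: cU; rewrite cards_eq0 => /eqP->.
have : enum U != [::] by rewrite -size_eq0 -cardE cU.
case/(exists_argmin p) => y0; rewrite mem_enum => y0U y0_min.
apply: (Pstep U y0 y0U) => [z zU|]; first by apply: y0_min; rewrite mem_enum.
by apply: IH; move/eqP: cU; rewrite (cardsD1 y0) y0U add1n eqSS => /eqP.
Qed.

Lemma thr_mass_empty (f : {set Ty} -> R) :
  \big[Rplus/0]_(A : {set Ty} | A \subset set0) (thr_mass set0 A * f A) = f set0.
Proof.
rewrite (eq_bigl (fun A => A == set0)) => [|A]; last by rewrite subset0.
rewrite big_pred1_eq /thr_mass thr_lo_self /thr_hi enum_set0 /= Rminus_0_r Rmax_right; lra.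
Qed.

Lemma thr_mass_total (U : {set Ty}) :
  \big[Rplus/0]_(A : {set Ty} | A \subset U) (thr_mass U A * 1) = 1.
Proof.
elim/thr_set_ind: U => [|U y0 y0U y0_min IH]; first by rewrite thr_mass_empty.
by rewrite (thr_mass_peel y0U y0_min) IH; ring.
Qed.

Lemma thr_mass_marginal (U : {set Ty}) y : y \in U ->
  \big[Rplus/0]_(A : {set Ty} | A \subset U)
     (thr_mass U A * (if y \in A then 1 else 0)) = p y.
Proof.
elim/thr_set_ind: U => [|U y0 y0U y0_min IH]; first by rewrite inE.
move=> yU; rewrite (thr_mass_peel y0U y0_min) yU.
case: (eqVneq y y0) => [->|ny0]; last by rewrite IH ?inE ?ny0 ?yU //=; ring.
rewrite big1 ?inE ?eqxx /= => [|A /subsetP AU]; first ring.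
by case: ifP => [/AU|]; rewrite ?inE ?eqxx // Rmult_0_r.
Qed.

End ThresholdSets.

Section OneStep.
Variables (V : finType) (e : rel V).
Hypotheses (e_sym : symmetric e) (e_irr : irreflexive e)
           (deg_pos : forall x : V, (0 < deg e x)%nat).

Definition indic (A : {set V}) (y : V) : R := if y \in A then 1 else 0.
Definition degR (x : V) : R := INR (deg e x).

Lemma degR_ge1 (x : V) : 1 <= degR x.
Proof. exact: (le_INR 1) (leP (deg_pos x)). Qed.

Lemma vol_sum (A : {set V}) : vol e A = \big[Rplus/0]_(y : V) (degR y * indic A y).
Proof.
rewrite /vol INR_sum big_mkcond; apply: eq_bigr => y _.
by rewrite /indic /degR; case: (y \in A); ring.
Qed.

Lemma vol_ge0 (A : {set V}) : 0 <= vol e A.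
Proof. exact: pos_INR. Qed.

Lemma vol_le_setT (A : {set V}) : vol e A <= vol e [set: V].
Proof.
rewrite !vol_sum; apply: Rsum_le => y _; rewrite /indic inE.
by have := degR_ge1 y; case: (y \in A); lra.
Qed.

(* Volumes are integers, so a nonempty set has volume at least 1. *)
Lemma vol_ge1 (A : {set V}) : A != set0 -> 1 <= vol e A.
Proof.
case/set0Pn => x xA; apply: Rle_trans (degR_ge1 x) _.
by apply/le_INR/leP; rewrite (bigD1 x) //= leq_addr.
Qed.

(* A vertex and a neighbour give total volume [mu(V) >= 2 > 1]. *)
Lemma vol_setT_gt1 (x : V) : 1 < vol e [set: V].
Proof.
have /card_gt0P [y] := deg_pos x; rewrite inE => exy.
have yx : y != x by apply: contraTneq exy => ->; rewrite e_irr.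
apply: Rlt_le_trans (_ : 1 < degR x + degR y) _.
  by have := degR_ge1 x; have := degR_ge1 y; lra.
rewrite /vol /degR -plus_INR; apply/le_INR/leP.
by rewrite (bigD1 x) // (bigD1 y) /= ?inE // addnA leq_addr.
Qed.

Lemma lazyP_split (x y : V) : lazyP e x y =
  (if x == y then / 2 else 0) + (if e x y then / (2 * degR x) else 0).
Proof.
rewrite /lazyP /degR; case: eqP => [->|_]; first by rewrite e_irr; ring.
ring.
Qed.

Lemma lazyP_ge0 (x y : V) : 0 <= lazyP e x y.
Proof.
rewrite lazyP_split; have := degR_ge1 x => d1.
have : 0 < / (2 * degR x) by apply: Rinv_0_lt_compat; lra.
by case: (x == y); case: (e x y); lra.
Qed.

Lemma lazyP_row_sum (x : V) : \big[Rplus/0]_(y : V) lazyP e x y = 1.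
Proof.
under eq_bigr do rewrite lazyP_split.
rewrite big_split /= Rsum_pick Rsum_if_const.
by have := degR_ge1 x; rewrite /degR /deg => d1; field; lra.
Qed.

Lemma lazyP_stationary (z : V) :
  \big[Rplus/0]_(y : V) (degR y * lazyP e y z) = degR z.
Proof.
transitivity (\big[Rplus/0]_(y : V)
   ((if z == y then degR z / 2 else 0) + (if e z y then / 2 else 0))).
  apply: eq_bigr => y _; rewrite lazyP_split (e_sym z y) eq_sym.
  case: (eqVneq y z) => [->|_]; first by rewrite e_irr /=; field.
  by case: (e y z) => /=; [have d1 := degR_ge1 y; field; lra|ring].
by rewrite big_split /= Rsum_pick Rsum_if_const /degR /deg; field.
Qed.

Definition hit (S : {set V}) (y : V) : R := lazyPS e y S.

Lemma hit_sum (S : {set V}) (y : V) : hit S y = \big[Rplus/0]_(z in S) lazyP e y z.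
Proof. by rewrite /hit /lazyPS rsumE big_enum. Qed.

Lemma hit_ge0 (S : {set V}) (y : V) : 0 <= hit S y.
Proof. by rewrite hit_sum; apply: Rsum_ge0 => z _; exact: lazyP_ge0. Qed.

Lemma hit_complement (S : {set V}) (y : V) :
  hit S y + \big[Rplus/0]_(z | z \notin S) lazyP e y z = 1.
Proof. by rewrite hit_sum -(lazyP_row_sum y) [in RHS](bigID (mem S)). Qed.

Lemma hit_le1 (S : {set V}) (y : V) : hit S y <= 1.
Proof.
have := hit_complement S y.
have : 0 <= \big[Rplus/0]_(z | z \notin S) lazyP e y z by apply: Rsum_ge0 => z _; exact: lazyP_ge0.
lra.
Qed.

Lemma hit_in (S : {set V}) (y : V) : y \in S -> / 2 <= hit S y.
Proof.
move=> yS; rewrite hit_sum (bigD1 y) //= {1}/lazyP eqxx.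
have : 0 <= \big[Rplus/0]_(z | (z \in S) && (z != y)) lazyP e y z.
  by apply: Rsum_ge0 => z _; exact: lazyP_ge0.
lra.
Qed.

Lemma hit_out (S : {set V}) (y : V) : y \notin S -> hit S y <= / 2.
Proof.
move=> yS; have := hit_complement S y; rewrite (bigD1 y) //= {1}/lazyP eqxx.
have : 0 <= \big[Rplus/0]_(z | (z \notin S) && (z != y)) lazyP e y z.
  by apply: Rsum_ge0 => z _; exact: lazyP_ge0.
lra.
Qed.

Lemma espK_thr (S A : {set V}) : espK e S A = thr_mass (hit S) setT A.
Proof. by rewrite /espK /thr_mass /esp_hi /esp_lo /thr_hi /thr_lo setTD. Qed.

Lemma espK_ge0 (S A : {set V}) : 0 <= espK e S A.
Proof. exact: Rmax_l. Qed.

Lemma espK_total (S : {set V}) : \big[Rplus/0]_(A : {set V}) espK e S A = 1.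
Proof.
rewrite -(thr_mass_total (@hit_ge0 S) (@hit_le1 S) setT).
rewrite [RHS](eq_bigl xpredT) => [|A]; last by rewrite subsetT.
by apply: eq_bigr => A _; rewrite espK_thr Rmult_1_r.
Qed.

Lemma espK_linear (S : {set V}) (c : V -> R) :
  \big[Rplus/0]_(A : {set V}) (espK e S A * \big[Rplus/0]_(y : V) (c y * indic A y)) =
  \big[Rplus/0]_(y : V) (c y * hit S y).
Proof.
rewrite (eq_bigr (fun A => \big[Rplus/0]_(y : V) (espK e S A * (c y * indic A y))))
  => [|A _]; last exact: Rsum_mull.
rewrite exchange_big /=; apply: eq_bigr => y _.
rewrite -(thr_mass_marginal (@hit_ge0 S) (@hit_le1 S) (in_setT y)) Rsum_mull.
rewrite [RHS](eq_bigl xpredT) => [|A]; last by rewrite subsetT.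
by apply: eq_bigr => A _; rewrite espK_thr /indic; ring.
Qed.

Lemma espK_vol (S : {set V}) :
  \big[Rplus/0]_(A : {set V}) (espK e S A * vol e A) = vol e S.
Proof.
under eq_bigr do rewrite vol_sum.
rewrite espK_linear; under eq_bigr do rewrite hit_sum Rsum_mull.
rewrite exchange_big /= vol_sum big_mkcond /=; apply: eq_bigr => z _.
by rewrite lazyP_stationary /indic; case: (z \in S); ring.
Qed.

Lemma bdry_ge0 (S : {set V}) : 0 <= bdry e S.
Proof. exact: pos_INR. Qed.

Lemma bdry_half_sum (S : {set V}) : bdry e S / 2 =
  \big[Rplus/0]_(y : V) \big[Rplus/0]_(z : V)
     (if [&& z \in S, y \notin S & e z y] then / 2 else 0).
Proof.
rewrite /bdry -[INR _]Rmult_1_r -Rsum_if_const /Rdiv Rsum_mulr.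
pose F z y := (if [&& z \in S, y \notin S & e z y] then 1 else 0) * / 2.
rewrite (eq_bigr (fun pr : V * V => F pr.1 pr.2)) => [|[z y] _]; last by [].
rewrite -(pair_bigA _ F) exchange_big /=.
by apply: eq_bigr => y _; apply: eq_bigr => z _; rewrite /F; case: ifP => _; ring.
Qed.

Lemma espK_outflow (S : {set V}) :
  \big[Rplus/0]_(A : {set V}) (espK e S A * vol e (A :\: S)) = bdry e S / 2.
Proof.
rewrite (eq_bigr (fun A => espK e S A *
   \big[Rplus/0]_(y : V) ((degR y * (1 - indic S y)) * indic A y))) => [|A _]; last first.
  congr (_ * _); rewrite vol_sum; apply: eq_bigr => y _.
  by rewrite /indic !inE; case: (y \in A); case: (y \in S) => /=; ring.
rewrite espK_linear bdry_half_sum; apply: eq_bigr => y _.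
rewrite hit_sum big_mkcond Rsum_mull /=; apply: eq_bigr => z _.
rewrite /indic; case zS: (z \in S) => /=; last by case: (y \in S); ring.
case yS: (y \in S) => /=; first ring.
have zy : y != z by apply: contraFneq yS => ->.
rewrite /lazyP (negbTE zy) (e_sym z y).
by case: (e y z) => /=; [have d1 := degR_ge1 y; rewrite /degR in d1 *; field; lra|ring].
Qed.

(* Laziness makes the evolving set process monotone in one step: a next state
   of positive probability is comparable with the current one. *)
Lemma espK_nested (S A : {set V}) : 0 < espK e S A -> S \subset A \/ A \subset S.
Proof.
move=> hK; case: (boolP (S \subset A)) => [|/subsetPn [a aS aA]]; first by left.
case: (boolP (A \subset S)) => [|/subsetPn [b bA bS]]; first by right.
have gap : hit S b <= hit S a by have := hit_in aS; have := hit_out bS; lra.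
by move: hK; rewrite espK_thr (thr_mass_gap bA _ gap) ?inE ?aA //; lra.
Qed.

Lemma vol_setD_sub (B C : {set V}) : C \subset B -> vol e B = vol e (B :\: C) + vol e C.
Proof. by move=> CB; rewrite /vol -plus_INR (big_setID C) /= (setIidPr CB) addnC. Qed.

Lemma vol_symdiff (A S : {set V}) :
  vol e (symdiff A S) = 2 * vol e (A :\: S) - (vol e A - vol e S).
Proof.
transitivity (\big[Rplus/0]_(y : V) (2 * (degR y * indic (A :\: S) y)
   + (-1) * (degR y * indic A y) + 1 * (degR y * indic S y))).
  rewrite vol_sum; apply: eq_bigr => y _.
  by rewrite /symdiff /indic !inE; case: (y \in A); case: (y \in S) => /=; ring.
by rewrite Rsum_lin3 -!vol_sum; ring.
Qed.

Lemma vol_symdiff_nested (A S : {set V}) : S \subset A \/ A \subset S ->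
  vol e (symdiff A S) = Rabs (vol e A - vol e S).
Proof.
have sub_case (B C : {set V}) : C \subset B ->
    vol e (symdiff B C) = vol e B - vol e C /\ vol e (symdiff C B) = vol e B - vol e C.
  move=> CB; have -> : symdiff C B = symdiff B C by rewrite /symdiff setUC.
  have -> : symdiff B C = B :\: C.
    by rewrite /symdiff (_ : C :\: B = set0) ?setU0 //; apply/eqP; rewrite setD_eq0.
  by rewrite (vol_setD_sub CB); split; ring.
case=> [SA|AS].
  have [-> _] := sub_case _ _ SA; rewrite Rabs_pos_eq //.
  by have := vol_ge0 (A :\: S); rewrite (vol_setD_sub SA); lra.
have [_ ->] := sub_case _ _ AS; rewrite Rabs_minus_sym Rabs_pos_eq //.
by have := vol_ge0 (S :\: A); rewrite (vol_setD_sub AS); lra.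
Qed.

Lemma espK_symdiff (S : {set V}) :
  \big[Rplus/0]_(A : {set V}) (espK e S A * vol e (symdiff A S)) = bdry e S.
Proof.
transitivity (\big[Rplus/0]_(A : {set V}) (2 * (espK e S A * vol e (A :\: S))
   + (-1) * (espK e S A * vol e A) + vol e S * espK e S A)).
  by apply: eq_bigr => A _; rewrite vol_symdiff; ring.
by rewrite Rsum_lin3 espK_outflow espK_vol espK_total; field.
Qed.

Lemma espK_ratio_mean (S : {set V}) : 0 < vol e S ->
  \big[Rplus/0]_(A : {set V}) (espK e S A * (vol e A / vol e S)) = 1.
Proof.
move=> vS; transitivity (\big[Rplus/0]_(A : {set V}) (espK e S A * vol e A) * / vol e S).
  by rewrite Rsum_mulr; apply: eq_bigr => A _; rewrite /Rdiv; ring.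
by rewrite espK_vol; field; lra.
Qed.

Lemma espK_ratio_abs_dev (S : {set V}) : 0 < vol e S ->
  \big[Rplus/0]_(A : {set V}) (espK e S A * Rabs (vol e A / vol e S - 1))
  = bdry e S / vol e S.
Proof.
move=> vS; rewrite /Rdiv -espK_symdiff Rsum_mulr; apply: eq_bigr => A _.
case: (Rle_lt_or_eq_dec _ _ (espK_ge0 S A)) => [/espK_nested nested|<-]; last ring.
rewrite (vol_symdiff_nested nested).
have -> : vol e A * / vol e S - 1 = (vol e A - vol e S) * / vol e S by field; lra.
by rewrite Rabs_mult (Rabs_pos_eq (/ vol e S)); [ring|apply/Rlt_le/Rinv_0_lt_compat].
Qed.

Definition potential (l a : R) (S : {set V}) (t : nat) : R :=
  a / vol e S + l * (ln (vol e [set: V]) - ln (vol e S)) + 4 * INR t / l.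

(* The integrand of the one-step bound, with [X = mu(A) / mu(S)]; for
   [mu(A) > 0] it equals [X * potential l (a + cost of the step) A t]. *)
Definition step_integrand (l a : R) (S : {set V}) (t : nat) (A : {set V}) : R :=
  let X := vol e A / vol e S in
  (a + (vol e (symdiff A S) + bdry e S)) / vol e S
  + l * X * (ln (vol e [set: V]) - ln (vol e S)) - l * (X * ln X)
  + 4 * INR t * X / l.

(* Pointwise, the entropy term pays for the deviation [|X - 1|]. *)
Lemma step_integrand_le (l a : R) (S : {set V}) (t : nat) (A : {set V}) :
  0 < vol e S -> 0 < l ->
  let X := vol e A / vol e S in
  step_integrand l a S t A <=
  (a / vol e S + bdry e S / vol e S + l + 2 / l)
  + (l * (ln (vol e [set: V]) - ln (vol e S)) + 4 * INR t / l - l + 2 / l) * X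
  + vol e (symdiff A S) / vol e S - 2 * Rabs (X - 1).
Proof.
move=> vS lp X.
have X0 : 0 <= X by apply: Rmult_le_pos; [exact: vol_ge0|apply/Rlt_le/Rinv_0_lt_compat].
have := abs_dev_le_entropy X0 lp.
rewrite /step_integrand -/X; move: X X0 (ln _ - ln _) => X X0 L.
have -> : 2 * (1 + X) / l = 2 / l + 2 / l * X by field; lra.
have -> : 4 * INR t * X / l = 4 * INR t / l * X by field; lra.
have -> : (a + (vol e (symdiff A S) + bdry e S)) / vol e S =
          a / vol e S + bdry e S / vol e S + vol e (symdiff A S) / vol e S by field; lra.
move: (2 / l) (4 * INR t / l) (ln X) => c d lnX; nra.
Qed.

(* Averaging the pointwise bound over the kernel, using [E X = 1],
   [E mu(A Delta S) = bdry S] and [E |X - 1| = phi(S)]. *)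
Lemma step_integrand_mean (l a : R) (S : {set V}) (t : nat) :
  0 < vol e S -> 0 < l ->
  \big[Rplus/0]_(A : {set V}) (espK e S A * step_integrand l a S t A)
  <= potential l a S t.+1.
Proof.
move=> vS lp.
pose al := a / vol e S + bdry e S / vol e S + l + 2 / l.
pose be := l * (ln (vol e [set: V]) - ln (vol e S)) + 4 * INR t / l - l + 2 / l.
apply: Rle_trans (_ : \big[Rplus/0]_(A : {set V})
   (al * espK e S A + be * (espK e S A * (vol e A / vol e S))
    + (/ vol e S) * (espK e S A * vol e (symdiff A S))
    + (-2) * (espK e S A * Rabs (vol e A / vol e S - 1))) <= _).
  apply: Rsum_le => A _; have := step_integrand_le a t A vS lp.
  have := espK_ge0 S A; rewrite -/al -/be /Rdiv => K0 hle.
  have := Rmult_le_compat_l _ _ _ K0 hle; lra.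
rewrite Rsum_lin4 espK_total espK_ratio_mean // espK_symdiff espK_ratio_abs_dev //.
by rewrite /al /be /potential S_INR; apply: Req_le; field; lra.
Qed.

Lemma espKhat_ge0 (S A : {set V}) : 0 < vol e S -> 0 <= espKhat e S A.
Proof.
move=> vS; apply: Rmult_le_pos (espK_ge0 _ _); apply: Rmult_le_pos (vol_ge0 _) _.
exact/Rlt_le/Rinv_0_lt_compat.
Qed.

Lemma potential_step (l a : R) (S : {set V}) (t : nat) :
  0 < vol e S -> 0 < l -> 0 <= a ->
  \big[Rplus/0]_(A : {set V})
     (espKhat e S A * potential l (a + (vol e (symdiff A S) + bdry e S)) A t)
  <= potential l a S t.+1.
Proof.
move=> vS lp a0; apply: Rle_trans (step_integrand_mean a t vS lp).
apply: Rsum_le => A _; rewrite /espKhat Rmult_assoc (Rmult_comm (_ / _)) Rmult_assoc.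
apply: Rmult_le_compat_l (espK_ge0 _ _) _.
have cost0 : 0 <= a + (vol e (symdiff A S) + bdry e S).
  by have := vol_ge0 (symdiff A S); have := bdry_ge0 S; lra.
case: (Rle_lt_or_eq_dec _ _ (vol_ge0 A)) => [vA|vA0]; last first.
  rewrite /potential /step_integrand -vA0 /Rdiv !(Rmult_0_l, Rmult_0_r).
  rewrite Rminus_0_r !Rplus_0_r; apply: Rmult_le_pos cost0 _.
  exact/Rlt_le/Rinv_0_lt_compat.
apply: Req_le; rewrite /potential /step_integrand.
have -> : ln (vol e A / vol e S) = ln (vol e A) - ln (vol e S).
  have iS : 0 < / vol e S by apply: Rinv_0_lt_compat.
  by rewrite /Rdiv ln_mult // ln_Rinv //; ring.
field; lra.
Qed.

End OneStep.

Section Trajectories.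
Variables (V : finType) (e : rel V).
Hypotheses (e_sym : symmetric e) (e_irr : irreflexive e)
           (deg_pos : forall x : V, (0 < deg e x)%nat).

Lemma expect_sum (T : nat) (S0 : {set V}) (f : T.-tuple {set V} -> R) :
  expect e S0 f = \big[Rplus/0]_(w : T.-tuple {set V}) (path_weight e T S0 w * f w).
Proof. by rewrite /expect rsumE big_enum. Qed.

Lemma expect_ext (T : nat) (S0 : {set V}) (f g : T.-tuple {set V} -> R) :
  (forall w, f w = g w) -> expect e S0 f = expect e S0 g.
Proof. by move=> fg; rewrite !expect_sum; apply: eq_bigr => w _; rewrite fg. Qed.

Lemma state_cons (S0 x : {set V}) (w : seq {set V}) j : (j <= size w)%nat ->
  state S0 (x :: w) j.+1 = state x w j.
Proof. by move=> hj; rewrite /state /=; apply: set_nth_default. Qed.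

Lemma path_weight_cons (T : nat) (S0 x : {set V}) (w : seq {set V}) : size w = T ->
  path_weight e T.+1 S0 (x :: w) = espKhat e S0 x * path_weight e T x w.
Proof.
move=> sw; rewrite /path_weight /=; congr (_ * _).
rewrite (_ : iota 1 T = map (addn 1) (iota 0 T)); last by rewrite -iotaDl.
rewrite -map_comp; congr foldr; apply/eq_in_map => j.
rewrite mem_iota add0n => /andP [_ jT] /=.
by rewrite add1n !state_cons // sw // ltnW.
Qed.

Lemma expect_first_step (T : nat) (S0 : {set V}) (f : T.+1.-tuple {set V} -> R) :
  expect e S0 f = \big[Rplus/0]_(x : {set V})
     (espKhat e S0 x * expect e x (fun w : T.-tuple {set V} => f [tuple of x :: w])).
Proof.
rewrite expect_sum.
pose cons_pair (p : {set V} * T.-tuple {set V}) := [tuple of p.1 :: p.2].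
have cons_bij : {on [pred i | true], bijective cons_pair}.
  apply: onW_bij; exists (fun t : T.+1.-tuple {set V} => (thead t, [tuple of behead t])).
    by move=> [x w]; rewrite /cons_pair /= theadE; congr pair; apply: val_inj.
  by move=> t; rewrite /cons_pair /=; exact: esym (tuple_eta t).
rewrite (reindex cons_pair) //= -(pair_bigA _ (fun (x : {set V}) (w : T.-tuple {set V}) =>
  path_weight e T.+1 S0 [tuple of x :: w] * f [tuple of x :: w])) /=.
apply: eq_bigr => x _; rewrite expect_sum Rsum_mull; apply: eq_bigr => w _.
by rewrite path_weight_cons ?size_tuple //; ring.
Qed.

Lemma expect_one (T : nat) (S0 : {set V}) : 0 < vol e S0 ->
  expect e S0 (fun _ : T.-tuple {set V} => 1) = 1.
Proof.
elim: T S0 => [|T IH] S0 vS.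
  rewrite expect_sum (eq_bigl (pred1 [tuple])) => [|w]; last by apply/esym/eqP/tuple0.
  by rewrite big_pred1_eq /path_weight /=; ring.
rewrite expect_first_step -[RHS](espK_ratio_mean e_sym e_irr deg_pos vS).
apply: eq_bigr => x _; rewrite /espKhat.
case: (Rle_lt_or_eq_dec _ _ (vol_ge0 e x)) => [vx|<-]; first by rewrite IH //; ring.
by rewrite /Rdiv; ring.
Qed.

Definition run_cost (S0 : {set V}) (w : seq {set V}) (t : nat) : R :=
  rsum (iota 1 t) (fun j => vol e (symdiff (state S0 w j) (state S0 w j.-1))
                            + bdry e (state S0 w j.-1)).

Lemma run_cost_cons (S0 x : {set V}) (w : seq {set V}) t : (t <= size w)%nat ->
  run_cost S0 (x :: w) t.+1 = (vol e (symdiff x S0) + bdry e S0) + run_cost x w t.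
Proof.
move=> ht; rewrite /run_cost /=; congr (_ + _).
rewrite !rsumE -[2%nat]/(1 + 1)%nat iotaDl big_map.
apply: eq_big_seq => j; rewrite mem_iota add1n ltnS => /andP [j1 jt].
have jw : (j <= size w)%nat by apply: leq_trans jt ht.
have prev : state S0 (x :: w) j = state x w j.-1.
  by rewrite -{1}(prednK j1) state_cons // (leq_trans (leq_pred j) jw).
by rewrite add1n /= state_cons // prev.
Qed.

Lemma stopping_time_zero (T : nat) (S0 : {set V}) (tau : T.-tuple {set V} -> nat) w0 :
  is_stopping_time S0 tau -> tau w0 = O -> forall w, tau w = O.
Proof. by move=> stop h0 w; apply/(stop w0 w O) => // j; rewrite leqn0 => /eqP ->. Qed.

Definition shift_time (T : nat) (x : {set V}) (tau : T.+1.-tuple {set V} -> nat)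
  (w : T.-tuple {set V}) : nat := (tau [tuple of x :: w]).-1.

Lemma state_cons_agree (S0 x : {set V}) (w w' : seq {set V}) k :
  size w = size w' -> state x w k = state x w' k ->
  state S0 (x :: w) k.+1 = state S0 (x :: w') k.+1.
Proof.
rewrite /state /= => sw agree.
case: (ltnP k (size (x :: w))) => hk.
  by rewrite (set_nth_default x) // (set_nth_default x) // /= -sw.
by rewrite !nth_default // /= -sw.
Qed.

Lemma stopping_time_shift (T : nat) (S0 x : {set V}) (tau : T.+1.-tuple {set V} -> nat) :
  is_stopping_time S0 tau -> (forall w, tau w <> O) ->
  is_stopping_time x (shift_time x tau).
Proof.
move=> stop nz w w' t agree.
have succE u : shift_time x tau u = t <-> tau [tuple of x :: u] = t.+1.
  rewrite /shift_time; have := nz [tuple of x :: u].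
  by case: (tau _) => [|n] //= _; split => [->|[]].
rewrite !succE; apply: stop => -[|k] hk //.
by apply: state_cons_agree; [rewrite !size_tuple|exact: agree].
Qed.

Definition stopped_cost (T : nat) (S0 : {set V}) (tau : T.-tuple {set V} -> nat)
  (a : R) (w : T.-tuple {set V}) : R :=
  (a + run_cost S0 w (tau w)) / vol e (state S0 w (tau w)).

Lemma stopped_cost_at_start (T : nat) (S0 : {set V}) (tau : T.-tuple {set V} -> nat) a :
  0 < vol e S0 -> (forall w, tau w = O) ->
  expect e S0 (stopped_cost S0 tau a) = a / vol e S0.
Proof.
move=> vS tau0; rewrite -[RHS]Rmult_1_r -(@expect_one T S0 vS) !expect_sum Rsum_mull.
by apply: eq_bigr => w _; rewrite /stopped_cost tau0 /run_cost /state /= /Rdiv; ring.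
Qed.

Lemma potential_ge_start (l a : R) (S : {set V}) (t : nat) :
  0 < vol e S -> 0 < l -> a / vol e S <= potential e l a S t.
Proof.
move=> vS lp; rewrite /potential.
have := ln_le_mono vS (vol_le_setT deg_pos S); have := pos_INR t.
have : 0 < / l by apply: Rinv_0_lt_compat.
rewrite /Rdiv; nra.
Qed.

Lemma stopped_cost_shift (T : nat) (S0 x : {set V}) (tau : T.+1.-tuple {set V} -> nat) a :
  (forall w, tau w <> O) -> (forall w, (tau w <= T.+1)%nat) ->
  expect e x (fun w : T.-tuple {set V} => stopped_cost S0 tau a [tuple of x :: w]) =
  expect e x (stopped_cost x (shift_time x tau)
                (a + (vol e (symdiff x S0) + bdry e S0))).
Proof.
move=> nz tau_le; apply: expect_ext => w.
have tauE : tau [tuple of x :: w] = (shift_time x tau w).+1.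
  by rewrite /shift_time prednK // lt0n; apply/eqP; exact: nz.
have le_size : (shift_time x tau w <= size w)%nat.
  by rewrite size_tuple -ltnS -tauE tau_le.
by rewrite /stopped_cost tauE run_cost_cons // state_cons //; congr (_ / _); ring.
Qed.

Lemma shift_time_le (T : nat) (x : {set V}) (tau : T.+1.-tuple {set V} -> nat) :
  (forall w, (tau w <= T.+1)%nat) -> forall w, (shift_time x tau w <= T)%nat.
Proof. by move=> tau_le w; rewrite /shift_time -ltnS; case: (tau _) (tau_le [tuple of x :: w]). Qed.

Lemma stopping_time_dichotomy (T : nat) (S0 : {set V}) (tau : T.-tuple {set V} -> nat) :
  is_stopping_time S0 tau -> (forall w, tau w = O) \/ (forall w, tau w <> O).
Proof.
move=> stop; case: (boolP [exists w, tau w == O]) => [/existsP [w0 /eqP h0]|none].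
  by left; exact: stopping_time_zero stop h0.
by right => w /eqP hw; move/existsPn: none => /(_ w); rewrite hw.
Qed.

Lemma stopped_cost_le_potential (l : R) (T : nat) (S0 : {set V})
    (tau : T.-tuple {set V} -> nat) (a : R) :
  0 < l -> 0 < vol e S0 -> 0 <= a -> (forall w, (tau w <= T)%nat) ->
  is_stopping_time S0 tau ->
  expect e S0 (stopped_cost S0 tau a) <= potential e l a S0 T.
Proof.
move=> lp; elim: T S0 tau a => [|T IH] S0 tau a vS a0 tau_le stop.
  rewrite stopped_cost_at_start // => [|w]; first exact: potential_ge_start.
  by apply/eqP; rewrite -leqn0 tau_le.
have [tau0|tau_pos] := stopping_time_dichotomy stop.
  by rewrite stopped_cost_at_start //; exact: potential_ge_start.
rewrite expect_first_step; apply: Rle_trans (potential_step e_sym e_irr deg_pos T vS lp a0).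
apply: Rsum_le => x _; rewrite stopped_cost_shift //.
case: (Rle_lt_or_eq_dec _ _ (vol_ge0 e x)) => [vx|vx0]; last first.
  by rewrite /espKhat -vx0 /Rdiv !Rmult_0_l; lra.
apply: Rmult_le_compat_l; first exact: espKhat_ge0.
apply: IH => //; last exact: stopping_time_shift stop tau_pos.
  by have := vol_ge0 e (symdiff x S0); have := bdry_ge0 e S0; lra.
exact: shift_time_le.
Qed.

End Trajectories.

(* Optimizing the free parameter: [l = 2 q / ln mu(V)] with
   [q = sqrt (T ln mu(V))] makes the potential at most [1 + 4 q]. *)
Lemma potential_optimum (V : finType) (e : rel V) (e_irr : irreflexive e)
    (deg_pos : forall x : V, (0 < deg e x)%nat) (S0 : {set V}) (T : nat) :
  S0 != set0 -> (0 < T)%nat ->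
  exists2 l, 0 < l &
    potential e l (vol e S0) S0 T <= 1 + 4 * sqrt (INR T * ln (vol e [set: V])).
Proof.
move=> S0_ne T_pos; have [x0 _] := set0Pn _ S0_ne.
have vS1 := vol_ge1 deg_pos S0_ne.
have lnV : 0 < ln (vol e [set: V]).
  by rewrite -ln_1; apply: ln_increasing; [lra|exact: vol_setT_gt1 e_irr deg_pos x0].
have lnS : 0 <= ln (vol e S0) by rewrite -ln_1; apply: ln_le_mono; lra.
have Tp : 0 < INR T by apply/lt_0_INR/ltP.
set q := sqrt _; have qp : 0 < q by apply/sqrt_lt_R0/Rmult_lt_0_compat.
have qq : q * q = INR T * ln (vol e [set: V]) by apply: sqrt_sqrt; nra.
exists (2 * q / ln (vol e [set: V])); first by apply: Rdiv_lt_0_compat; lra.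
rewrite /potential; move: (ln (vol e [set: V])) lnV qq => L lnV qq.
have -> : INR T = q * q / L by rewrite qq; field; lra.
have : 0 <= 2 * q / L * ln (vol e S0).
  by apply: Rmult_le_pos => //; apply/Rlt_le/Rdiv_lt_0_compat; lra.
have -> : vol e S0 / vol e S0 = 1 by field; lra.
have -> : 4 * (q * q / L) / (2 * q / L) = 2 * q by field; lra.
have -> : 2 * q / L * (L - ln (vol e S0)) = 2 * q - 2 * q / L * ln (vol e S0) by field; lra.
lra.
Qed.

Close Scope R_scope.

Theorem theorem5 (V : finType) (e : rel V)
  (e_sym : symmetric e) (e_irr : irreflexive e)
  (deg_pos : forall x : V, (0 < deg e x)%N)
  (S0 : {set V}) (hS0 : S0 != set0) (T : nat)
  (tau : T.-tuple {set V} -> nat)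
  (tau_le : forall w, (tau w <= T)%N)
  (tau_stop : is_stopping_time S0 tau) :
  (expect e S0
     (fun w => cost e S0 w (tau w) / vol e (state S0 w (tau w)))
   <= 1 + 4 * sqrt (INR T * ln (vol e [set: V])))%R.
Proof.
have vS : (0 < vol e S0)%R by have := vol_ge1 deg_pos hS0; lra.
(* The cost is [mu(S0)] plus the running cost. *)
rewrite (@expect_ext _ _ _ _ _ (stopped_cost e S0 tau (vol e S0))) //.
case: (posnP T) => [T0|T_pos].
  subst T; rewrite stopped_cost_at_start // => [|w]; last first.
    by apply/eqP; rewrite -leqn0 tau_le.
  by rewrite Rmult_0_l sqrt_0 Rmult_0_r Rplus_0_r; apply: Req_le; field; lra.
have [l lp bound] := potential_optimum e_irr deg_pos hS0 T_pos.
apply: Rle_trans bound.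
exact (stopped_cost_le_potential e_sym e_irr deg_pos lp vS (Rlt_le _ _ vS) tau_le tau_stop).
Qed.
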